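(* Let $v$ be any vertex of a Euclidean minimum spanning tree of a finite point set in the plane. Then: (i) if $\deg(v)=3$, there exists an angle at $v$ that is at most $120^\circ$; (ii) if $\deg(v)=4$, there exist two nonadjacent angles at $v$ that are at most $90^\circ$ and $120^\circ$, respectively; (iii) if $\deg(v)=5$, then all angles at $v$ are at most $120^\circ$, and there exist two nonadjacent angles at $v$ that are at most $90^\circ$.
   Context: Angles are measured in degrees. For a vertex $v$ of degree at least $3$ in the minimum spanning tree, sort its incident edges radially around $v$; an angle at $v$ is the angle between two radially consecutive incident edges. Two angles at $v$ are adjacent if they share a bounding edge, and nonadjacent otherwise. $\deg(v)$ denotes the degree of $v$ in the tree. *)

From HB Require Import structures.
From mathcomp Require Import all_boot all_order all_algebra.
From mathcomp Require Import all_classical all_reals.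
From mathcomp Require Import trigo.
Set Implicit Arguments. Unset Strict Implicit. Unset Printing Implicit Defensive.
Import Order.TTheory GRing.Theory Num.Theory.
Local Open Scope ring_scope.

Section EMST.
Variable R : realType.
Notation pt := (R * R)%type.

Definition edist (a b : pt) : R :=
  Num.sqrt ((a.1 - b.1) ^+ 2 + (a.2 - b.2) ^+ 2).

Definition vnorm (a : pt) : R := Num.sqrt (a.1 ^+ 2 + a.2 ^+ 2).

(* Counterclockwise angle (in degrees, in [0,360)) swept from direction a
   to direction b. *)
Definition ccw_deg (a b : pt) : R :=
  let t := acos ((a.1 * b.1 + a.2 * b.2) / (vnorm a * vnorm b)) * 180 / pi in
  if 0 <= a.1 * b.2 - a.2 * b.1 then t else 360 - t.

Variable n : nat.

Definition nedges (E : rel 'I_n) : nat :=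
  #|[set e : 'I_n * 'I_n | (e.1 < e.2)%N && E e.1 e.2]|.

Definition weight (p : 'I_n -> pt) (E : rel 'I_n) : R :=
  \sum_(i < n) \sum_(j < n | (i < j)%N && E i j) edist (p i) (p j).

Definition simple_graph (E : rel 'I_n) : Prop :=
  (forall i j, E i j = E j i) /\ (forall i, E i i = false).

Definition spanning_tree (E : rel 'I_n) : Prop :=
  simple_graph E /\ (forall i j, connect E i j) /\ nedges E = n.-1.

Definition is_EMST (p : 'I_n -> pt) (E : rel 'I_n) : Prop :=
  spanning_tree E /\
  forall E' : rel 'I_n, spanning_tree E' -> weight p E <= weight p E'.

Definition deg (E : rel 'I_n) (v : 'I_n) : nat := #|[set u | E v u]|.

Definition angle_at (p : 'I_n -> pt) (v u w : 'I_n) : R :=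
  ccw_deg (p u - p v) (p w - p v).

(* edges vu and vw are radially consecutive (vw follows vu counterclockwise
   around v): no other incident edge lies strictly inside the sweep. *)
Definition consecutive (p : 'I_n -> pt) (E : rel 'I_n) (v u w : 'I_n) : Prop :=
  [/\ E v u, E v w, u != w &
      forall x, E v x -> x != u -> x != w ->
        ~ (angle_at p v u x < angle_at p v u w)].

(* two angles (u,w) and (u',w') at v are nonadjacent: no shared bounding edge *)
Definition nonadjacent (u w u' w' : 'I_n) : Prop :=
  [/\ u != u', u != w', w != u' & w != w'].

End EMST.

From HB Require Import structures.
From mathcomp Require Import all_boot all_order all_algebra.
From mathcomp Require Import all_classical all_reals.
From mathcomp Require Import trigo.
From mathcomp Require Import ring lra.
Import Order.TTheory GRing.Theory Num.Theory.
Local Open Scope ring_scope.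
Set Implicit Arguments. Unset Strict Implicit. Unset Printing Implicit Defensive.

(* Let u, w be two neighbours of v in a Euclidean minimum spanning tree.
   Exchanging the tree edge vw for uw gives another spanning tree, so
   |vw| <= |uw|, and symmetrically |vu| <= |uw|: the side uw is a longest
   side of the triangle uvw, hence the angle at v is at least 60 degrees.
   Ordering the neighbours of v by polar angle, the deg(v) angles at v are
   the gaps between cyclically successive neighbours; each is at least 60
   and they sum to 360, and the three statements are elementary counting
   consequences: e.g. for degree 4 one of the two pairs of opposite gaps
   sums to at most 180, and for degree 5 at most two gaps exceed 90. *)

Section PolarAngle.
Variable R : realType.
Implicit Types (a b : R * R) (c s t : R).

Definition mod360 t : R := if 0 <= t then t else t + 360.

Lemma mod360_id t : 0 <= t -> mod360 t = t.
Proof. by rewrite /mod360 => ->. Qed.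

Lemma mod360_neg t : t < 0 -> mod360 t = t + 360.
Proof. by rewrite /mod360 ltNge => /negbTE ->. Qed.

Lemma mod360_cyclic (x y z : R) :
  0 <= x < 360 -> 0 <= y < 360 -> 0 <= z < 360 ->
  [|| (x < y) && (y <= z), (y <= z) && (z < x) | (z < x) && (x < y)] ->
  mod360 (y - x) <= mod360 (z - x).
Proof.
move=> /andP [x0 x1] /andP [y0 y1] /andP [z0 z1] /or3P [] /andP [h1 h2].
- by rewrite (@mod360_id (y - x)) ?(@mod360_id (z - x)); lra.
- by rewrite (@mod360_neg (y - x)) ?(@mod360_neg (z - x)); lra.
- by rewrite (@mod360_id (y - x)) ?(@mod360_neg (z - x)); lra.
Qed.

Definition rad2deg t : R := t * 180 / pi.

Lemma rad2degD t t' : rad2deg (t + t') = rad2deg t + rad2deg t'.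
Proof. by rewrite /rad2deg !mulrDl. Qed.

Lemma rad2degB t t' : rad2deg (t - t') = rad2deg t - rad2deg t'.
Proof. by rewrite /rad2deg !mulrBl. Qed.

Lemma rad2deg_pi : rad2deg pi = 180.
Proof. by rewrite /rad2deg mulrAC divff ?mul1r // gt_eqF // pi_gt0. Qed.

Lemma rad2deg_2pi : rad2deg (pi *+ 2) = 360.
Proof. by rewrite mulr2n rad2degD rad2deg_pi; lra. Qed.

Lemma ltr_rad2deg : {mono rad2deg : t t' / t < t'}.
Proof. by move=> t t'; rewrite /rad2deg !ltr_pM2r ?invr_gt0 ?pi_gt0. Qed.

Lemma rad2deg_ge0 t : 0 <= t -> 0 <= rad2deg t.
Proof. by move=> t0; rewrite /rad2deg !mulr_ge0 // invr_ge0 ltW // pi_gt0. Qed.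

Definition arg c s : R := if 0 <= s then acos c else pi *+ 2 - acos c.

Lemma arg_cos_sin c s : c ^+ 2 + s ^+ 2 = 1 ->
  [/\ 0 <= arg c s, arg c s < pi *+ 2, cos (arg c s) = c & sin (arg c s) = s].
Proof.
move=> cs1; have c1 : -1 <= c <= 1 by apply/andP; split; nra.
have a0 := acos_ge0 c1; have api := acos_lepi c1; have pi0 := pi_gt0 R.
have sinE : sin (acos c) = `|s|.
  by rewrite sin_acos // -sqrtr_sqr; congr Num.sqrt; lra.
rewrite /arg; case: ifP => s0.
  by split; rewrite ?acosK ?in_itv //= ?sinE ?ger0_norm // mulr2n; lra.
have {}s0 : s < 0 by rewrite ltNge s0.
have ac0 : 0 < acos c by apply: acos_gt0; case/andP: c1 => -> _ /=; nra.
have -> : pi *+ 2 - acos c = - acos c + pi *+ 2 by rewrite addrC.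
split; rewrite ?mulr2n; try lra.
  by rewrite cosD2pi cosN acosK // in_itv.
by rewrite sinD2pi sinN sinE ltr0_norm ?opprK.
Qed.

Lemma arg_cosK t : 0 <= t < pi *+ 2 -> arg (cos t) (sin t) = t.
Proof.
case/andP=> t0 t2; have pi0 := pi_gt0 R; rewrite /arg.
have [tpi|pit] := lerP t pi.
  by rewrite sin_ge0_pi ?t0 // cosK // in_itv /= t0.
have tE : t = - (pi *+ 2 - t) + pi *+ 2 by rewrite opprB subrK.
have t'pi : 0 < pi *+ 2 - t < pi by rewrite mulr2n; apply/andP; split; lra.
rewrite tE sinD2pi cosD2pi sinN cosN oppr_ge0 leNgt sin_gt0_pi //= cosK; first lra.
by case/andP: t'pi => h1 h2; rewrite in_itv /= !ltW.
Qed.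

Lemma arg_pscaler c s k : 0 < k -> arg c (s * k) = arg c s.
Proof. by move=> k0; rewrite /arg pmulr_lge0. Qed.

Lemma rad2deg_arg_cos_sin t : - (pi *+ 2) < t < pi *+ 2 ->
  rad2deg (arg (cos t) (sin t)) = mod360 (rad2deg t).
Proof.
case/andP=> t1 t2; have [t0|t0] := lerP 0 t.
  by rewrite arg_cosK ?t0 // mod360_id // rad2deg_ge0.
rewrite -cosD2pi -sinD2pi arg_cosK; last by apply/andP; split; lra.
rewrite rad2degD rad2deg_2pi mod360_neg //.
by rewrite -[0](mul0r (180 / pi)) mulrA ltr_rad2deg.
Qed.

Definition dot a b : R := a.1 * b.1 + a.2 * b.2.
Definition cross a b : R := a.1 * b.2 - a.2 * b.1.

Definition polar a : R := arg (a.1 / vnorm a) (a.2 / vnorm a).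

Lemma vnorm_sq a : vnorm a ^+ 2 = a.1 ^+ 2 + a.2 ^+ 2.
Proof. by rewrite /vnorm sqr_sqrtr // addr_ge0 ?sqr_ge0. Qed.

Lemma vnorm_gt0 a : a != 0 -> 0 < vnorm a.
Proof.
move=> a0; rewrite /vnorm sqrtr_gt0 lt_neqAle addr_ge0 ?sqr_ge0 // andbT eq_sym.
rewrite paddr_eq0 ?sqr_ge0 // !sqrf_eq0; apply: contra a0.
by case: a => x y /andP[/= /eqP -> /eqP ->].
Qed.

Lemma polar_spec a : a != 0 ->
  [/\ 0 <= polar a, polar a < pi *+ 2,
      cos (polar a) * vnorm a = a.1 & sin (polar a) * vnorm a = a.2].
Proof.
move=> a0; have na := vnorm_gt0 a0.
have unit : (a.1 / vnorm a) ^+ 2 + (a.2 / vnorm a) ^+ 2 = 1.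
  by rewrite !expr_div_n -mulrDl -vnorm_sq divff // sqrf_eq0 (gt_eqF na).
by case: (arg_cos_sin unit) => h0 h2 -> ->; split; rewrite // divfK ?gt_eqF.
Qed.

Lemma polar_dot_cross a b : a != 0 -> b != 0 ->
  dot a b = cos (polar b - polar a) * (vnorm a * vnorm b) /\
  cross a b = sin (polar b - polar a) * (vnorm a * vnorm b).
Proof.
move=> a0 b0; have [_ _ ha1 ha2] := polar_spec a0; have [_ _ hb1 hb2] := polar_spec b0.
by rewrite /dot /cross -ha1 -ha2 -hb1 -hb2 cosB sinB; split; ring.
Qed.

Lemma ccw_deg_dot_cross a b :
  ccw_deg a b = rad2deg (arg (dot a b / (vnorm a * vnorm b)) (cross a b)).
Proof.
rewrite /ccw_deg /arg -/(dot a b) -/(cross a b); case: ifP => // _.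
by rewrite rad2degB rad2deg_2pi.
Qed.

Lemma ccw_deg_polar a b : a != 0 -> b != 0 ->
  ccw_deg a b = mod360 (rad2deg (polar b) - rad2deg (polar a)).
Proof.
move=> a0 b0; have [dotE crossE] := polar_dot_cross a0 b0.
have nab : 0 < vnorm a * vnorm b by rewrite mulr_gt0 ?vnorm_gt0.
have [ra0 ra2 _ _] := polar_spec a0; have [rb0 rb2 _ _] := polar_spec b0.
rewrite ccw_deg_dot_cross dotE crossE mulfK ?gt_eqF // arg_pscaler //.
by rewrite rad2deg_arg_cos_sin -?rad2degB //; apply/andP; split; lra.
Qed.

Lemma cos_pi3 : cos (pi / 3) = 1 / 2 :> R.
Proof.
set x : R := pi / 3.
have h3 : cos (x + x + x) = -1 by rewrite -cospi /x; congr cos; field.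
have s2 := sin2cos2 x.
have c0 : 0 < cos x.
  by apply: cos_gt0_pihalf; have := pi_gt0 R; rewrite /x => ?; apply/andP; split; lra.
rewrite !cosD !sinD in h3.
set c := cos x in h3 s2 c0 *; set s := sin x in h3 s2 *.
have : (c + 1) * (2 * c - 1) ^+ 2 = 0 by nra.
by move/eqP; rewrite mulf_eq0 sqrf_eq0 => /orP [] /eqP h; lra.
Qed.

Lemma ccw_deg_lt60 a b : a != 0 -> b != 0 -> ccw_deg a b < 60 ->
  vnorm a * vnorm b < 2 * dot a b.
Proof.
move=> a0 b0; have [dotE _] := polar_dot_cross a0 b0.
have nab : 0 < vnorm a * vnorm b by rewrite mulr_gt0 ?vnorm_gt0.
set D := dot a b / (vnorm a * vnorm b).
have DE : D = cos (polar b - polar a) by rewrite /D dotE mulfK ?gt_eqF.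
have D1 : -1 <= D <= 1 by rewrite DE cos_geN1 cos_le1.
have pi0 := pi_gt0 R; have api := acos_lepi D1; have a0' := acos_ge0 D1.
rewrite ccw_deg_dot_cross -/D /arg; case: ifP => _; last first.
  have : rad2deg pi <= rad2deg (pi *+ 2 - acos D).
    by rewrite leNgt ltr_rad2deg -leNgt mulr2n; lra.
  by rewrite rad2deg_pi; lra.
have -> : 60 = rad2deg (pi / 3 : R).
  (* [pi] is generalized, otherwise [field] unfolds it in its side condition *)
  by rewrite /rad2deg; move: pi pi0 => x x0; field; rewrite gt_eqF.
rewrite ltr_rad2deg -ltr_cos ?in_itv /= ?a0' ?api //; last by apply/andP; split; lra.
by rewrite acosK ?in_itv // cos_pi3 /D ltr_pdivlMr // => h; lra.
Qed.

Lemma ccw_deg_ge60 a b : a != 0 -> b != 0 ->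
  vnorm a <= vnorm (a - b) -> vnorm b <= vnorm (a - b) -> 60 <= ccw_deg a b.
Proof.
move=> a0 b0 ha hb; rewrite leNgt; apply/negP => /(ccw_deg_lt60 a0 b0) hdot.
have na := vnorm_gt0 a0; have nb := vnorm_gt0 b0.
have nab : 0 <= vnorm (a - b) by rewrite sqrtr_ge0.
have abE : vnorm (a - b) ^+ 2 = vnorm a ^+ 2 + vnorm b ^+ 2 - 2 * dot a b.
  by rewrite !vnorm_sq /dot /=; ring.
nra.
Qed.

End PolarAngle.

Lemma edist_sym (R : realType) (a b : R * R) : edist a b = edist b a.
Proof. by rewrite /edist -sqrrN opprB -[b.2 - _]opprB sqrrN. Qed.

Lemma edist_vnorm (R : realType) (a b : R * R) : edist a b = vnorm (a - b).
Proof. by []. Qed.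

Section Edges.
Variable n : nat.
Implicit Types (E : rel 'I_n) (x y u v w : 'I_n).

Definition uedge x y : 'I_n * 'I_n := if (x < y)%N then (x, y) else (y, x).

Definition edge_set E := [set e : 'I_n * 'I_n | (e.1 < e.2)%N && E e.1 e.2].

Lemma nedgesE E : nedges E = #|edge_set E|.
Proof. by []. Qed.

Lemma uedgeC x y : uedge x y = uedge y x.
Proof. by rewrite /uedge; case: (ltngtP x y) => [_|_|/ord_inj ->]. Qed.

Lemma uedge_lt x y : x != y -> ((uedge x y).1 < (uedge x y).2)%N.
Proof. by rewrite /uedge; case: (ltngtP x y) => [_|_|/ord_inj ->] //=; rewrite eqxx. Qed.

Lemma uedge_inj x y x' y' : uedge x y = uedge x' y' ->
  (x = x' /\ y = y') \/ (x = y' /\ y = x').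
Proof. by rewrite /uedge; do 2 case: ifP => _; case=> -> ->; tauto. Qed.

Lemma mem_edge_set E x y : symmetric E -> x != y ->
  (uedge x y \in edge_set E) = E x y.
Proof.
move=> symE; rewrite /uedge inE; case: (ltngtP x y) => [xy|yx|/ord_inj ->] /=.
- by rewrite xy.
- by rewrite yx symE.
- by rewrite eqxx.
Qed.

Lemma edist_uedge (R : realType) (p : 'I_n -> R * R) x y :
  edist (p (uedge x y).1) (p (uedge x y).2) = edist (p x) (p y).
Proof. by rewrite /uedge; case: ifP => _ //=; apply: edist_sym. Qed.

Lemma weight_edge_set (R : realType) (p : 'I_n -> R * R) E :
  weight p E = \sum_(e in edge_set E) edist (p e.1) (p e.2).
Proof. by rewrite /weight pair_big_dep; apply: eq_bigl => e; rewrite inE. Qed.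

Section ConnectedEdges.
Variables (E : rel 'I_n) (r : 'I_n).
Hypotheses (symE : symmetric E) (rootE : forall x, connect E r x).

Definition reach_in x k :=
  [exists t : k.-tuple 'I_n, path E r t && (last r t == x)].

Lemma reach_inP x : exists k, reach_in x k.
Proof.
have /connectP [s s_path s_last] := rootE x.
by exists (size s); apply/existsP; exists (in_tuple s); rewrite s_path s_last eqxx.
Qed.

Definition depth x := ex_minn (reach_inP x).

Lemma depth_parent x : x != r -> exists z, E x z && (depth z < depth x)%N.
Proof.
rewrite {2}/depth; case: ex_minnP => m /existsP [t /andP [t_path t_last]] _ xr.
move: t_path t_last; have := size_tuple t; case/lastP: (tval t) => [|q y] q_size.
  by move=> _ /eqP xE; rewrite -xE eqxx in xr.
rewrite rcons_path last_rcons => /andP [q_path qyE] /eqP yx; subst y.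
exists (last r q); rewrite symE qyE /= /depth.
case: ex_minnP => m' _ /(_ (size q)) min_m'.
apply: leq_ltn_trans (min_m' _) _; last by rewrite -q_size size_rcons.
by apply/existsP; exists (in_tuple q); rewrite q_path eqxx.
Qed.

Definition parent x := odflt r [pick z | E x z && (depth z < depth x)%N].

Lemma parentP x : x != r -> E x (parent x) && (depth (parent x) < depth x)%N.
Proof.
move=> xr; rewrite /parent; case: pickP => [z //|none].
by have [z] := depth_parent xr; rewrite none.
Qed.

(* Every vertex other than the root owns the edge to its parent. *)
Lemma connected_nedges : (n.-1 <= nedges E)%N.
Proof.
pose f x := uedge x (parent x).
have f_edge : {subset f @: [set~ r] <= edge_set E}.
  move=> e /imsetP [x]; rewrite in_setC1 => xr ->.
  have /andP [xpx dpx] := parentP xr.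
  by rewrite mem_edge_set //; apply: contraTneq dpx => <-; rewrite ltnn.
have f_inj : {in [set~ r] &, injective f}.
  move=> x y; rewrite !in_setC1 => xr yr /uedge_inj [[-> _] // | [xE yE]].
  have /andP [_ ltx] := parentP xr; have /andP [_ lty] := parentP yr.
  rewrite yE in ltx; rewrite -xE in lty.
  by have := ltn_trans ltx lty; rewrite ltnn.
have -> : n.-1 = #|[set~ r]| by rewrite cardsC1 card_ord.
by rewrite nedgesE -(card_in_imset f_inj); apply/subset_leq_card/fintype.subsetP.
Qed.

End ConnectedEdges.

Section EdgeSwap.
Variables (E : rel 'I_n) (v u w : 'I_n).
Hypotheses (symE : symmetric E) (uw : u != w).

Definition swap_edge : rel 'I_n := fun a b =>
  (E a b && (uedge a b != uedge v w)) || (uedge a b == uedge u w).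

Lemma swap_edge_sym : symmetric swap_edge.
Proof. by move=> a b; rewrite /swap_edge symE uedgeC. Qed.

Lemma swap_edge_irr : irreflexive E -> irreflexive swap_edge.
Proof.
move=> irrE a; rewrite /swap_edge irrE /=; apply/eqP.
by case/uedge_inj => -[aE bE]; move: uw; rewrite -aE -bE eqxx.
Qed.

Lemma swap_edge_connect : E v u -> (forall i j, connect E i j) ->
  forall i j, connect swap_edge i j.
Proof.
move=> Evu conE i j; have swap_vu : swap_edge v u.
  rewrite /swap_edge Evu /=; apply/orP; left; apply: contra uw.
  by move=> /eqP /uedge_inj [[_ ->] // | [-> ->]].
have swap_uw : swap_edge u w by rewrite /swap_edge eqxx orbT.
have path_vw : connect swap_edge v w.
  by apply: connect_trans (connect1 swap_vu) (connect1 swap_uw).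
apply: connect_sub (conE i j) => x y Exy.
have [swap_xy|] := boolP (swap_edge x y); first exact: connect1.
rewrite /swap_edge Exy /= negb_or negbK => /andP [/eqP xyE _].
have [[-> ->] | [-> ->]] := uedge_inj xyE; first exact: path_vw.
by rewrite sym_connect_sym //; apply: swap_edge_sym.
Qed.

Lemma edge_set_swap : edge_set swap_edge = edge_set E :\ uedge v w :|: [set uedge u w].
Proof.
apply/setP => -[a b]; rewrite !inE /swap_edge /=.
have [ab|ba] := ltnP a b.
  have -> : uedge a b = (a, b) by rewrite /uedge ab.
  by rewrite /= [_ && E a b]andbC.
rewrite /= andbF /=; apply/esym/negbTE; apply: contraL (uedge_lt uw) => /eqP <- /=.
by rewrite -leqNgt.
Qed.

End EdgeSwap.

Lemma emst_exchange (R : realType) (p : 'I_n -> R * R) E v u w :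
  is_EMST p E -> E v u -> E v w -> u != w ->
  edist (p v) (p w) <= edist (p u) (p w).
Proof.
move=> [[[symE irrE] [conE nE]] minE] Evu Evw uw.
have vw : v != w by apply: contraTneq Evw => ->; rewrite irrE.
have vw_edge : uedge v w \in edge_set E by rewrite mem_edge_set.
have symE' := swap_edge_sym v u w symE.
have conE' := swap_edge_connect symE uw Evu conE.
have nE' := connected_nedges symE' (conE' v).
rewrite nedgesE edge_set_swap // in nE'.
rewrite nedgesE (cardsD1 (uedge v w)) vw_edge in nE.
have uw_edge : uedge u w \notin edge_set E.
  apply: contraTN nE' => uw_edge; rewrite -ltnNge -nE add1n /=.
  rewrite (finset.setUidPl _) ?finset.sub1set ?in_setD1 ?uw_edge ?andbT //.
  apply/eqP => /uedge_inj [[uv _] | [uw' _]].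
  - by move: Evu; rewrite uv irrE.
  - by move: uw; rewrite uw' eqxx.
have tree' : spanning_tree (swap_edge E v u w).
  split; first by split; [exact: symE' | exact: swap_edge_irr].
  split; first exact: conE'.
  rewrite nedgesE edge_set_swap // finset.setUC cardsU1 in_setD1.
  by rewrite (negbTE uw_edge) andbF -nE.
have := minE _ tree'; rewrite !weight_edge_set edge_set_swap // finset.setUC.
rewrite big_setU1 ?in_setD1 ?(negbTE uw_edge) ?andbF //= (big_setD1 _ vw_edge) /=.
rewrite !edist_uedge => ?; lra.
Qed.

End Edges.

Section Neighbours.
Variables (R : realType) (n : nat) (p : 'I_n -> R * R) (E : rel 'I_n) (v : 'I_n).

Definition theta x := rad2deg (polar (p x - p v)).

Definition nbrs := sort (fun x y => theta x <= theta y) (enum [set u | E v u]).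

Definition nb i := nth v nbrs i.

Definition cyc_succ i := (i.+1 %% deg E v)%N.

Hypothesis nbr_ne : forall x, E v x -> p x - p v != 0.
Hypothesis nbr_sep : forall x y, E v x -> E v y -> x != y -> 0 < angle_at p v x y.

Lemma theta_range x : E v x -> 0 <= theta x < 360.
Proof.
move=> Evx; have [t0 t2 _ _] := polar_spec (nbr_ne Evx).
by rewrite -rad2deg_2pi ltr_rad2deg t2 rad2deg_ge0.
Qed.

Lemma angle_at_theta x y : E v x -> E v y ->
  angle_at p v x y = mod360 (theta y - theta x).
Proof. by move=> Evx Evy; rewrite /angle_at ccw_deg_polar ?nbr_ne. Qed.

Lemma theta_inj x y : E v x -> E v y -> theta x = theta y -> x = y.
Proof.
move=> Evx Evy txy; apply/eqP/negPn/negP => /(nbr_sep Evx Evy).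
by rewrite angle_at_theta // txy subrr mod360_id // ltxx.
Qed.

Lemma size_nbrs : size nbrs = deg E v.
Proof. by rewrite size_sort /deg cardE. Qed.

Lemma mem_nbrs x : (x \in nbrs) = E v x.
Proof. by rewrite mem_sort mem_enum inE. Qed.

Lemma adj_nb i : (i < deg E v)%N -> E v (nb i).
Proof. by move=> ik; rewrite -mem_nbrs mem_nth ?size_nbrs. Qed.

Lemma nb_eq i j : (i < deg E v)%N -> (j < deg E v)%N -> (nb i == nb j) = (i == j).
Proof.
by move=> ik jk; rewrite nth_uniq ?size_nbrs ?sort_uniq ?enum_uniq.
Qed.

Lemma theta_nb_lt i j : (i < j < deg E v)%N -> theta (nb i) < theta (nb j).
Proof.
case/andP=> ij jk; have ik := ltn_trans ij jk.
have leT_trans : transitive (fun x y => theta x <= theta y).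
  by move=> y x z; apply: le_trans.
have nb_le : theta (nb i) <= theta (nb j).
  apply: (sorted_leq_nth leT_trans (fun x => lexx _)); last exact: ltnW.
  - by apply: sort_sorted => x y; apply: le_total.
  - by rewrite inE size_nbrs.
  - by rewrite inE size_nbrs.
rewrite lt_neqAle nb_le andbT; apply/eqP => /(theta_inj (adj_nb ik) (adj_nb jk)) /eqP.
by rewrite nb_eq // ltn_eqF.
Qed.

Lemma cyc_succ_lt i : (0 < deg E v)%N -> (cyc_succ i < deg E v)%N.
Proof. exact: ltn_pmod. Qed.

Lemma consecutive_nb i : (1 < deg E v)%N -> (i < deg E v)%N ->
  consecutive p E v (nb i) (nb (cyc_succ i)).
Proof.
move=> k1 ik; have sk := cyc_succ_lt i (ltnW k1).
have i_succ : i != cyc_succ i.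
  rewrite /cyc_succ; case: (ltnP i.+1 (deg E v)) => [ilt | ige].
    by rewrite modn_small // ltn_eqF.
  have -> : i.+1 = deg E v by apply/eqP; rewrite eqn_leq ik ige.
  by rewrite modnn -lt0n -ltnS (leq_trans k1 ige).
split; [exact: adj_nb | exact: adj_nb | by rewrite nb_eq |].
move=> x Evx; have := mem_nbrs x; rewrite Evx => x_nbrs.
have jk : (index x nbrs < deg E v)%N by rewrite -size_nbrs index_mem.
have -> : x = nb (index x nbrs) by rewrite /nb nth_index.
move: (index x nbrs) jk => j jk; rewrite !nb_eq // => ji js.
apply/negP; rewrite -leNgt !angle_at_theta ?adj_nb //.
apply: mod360_cyclic; try exact: theta_range (adj_nb _).
case: (ltnP i.+1 (deg E v)) => [ilt | ige].
  move: js; rewrite /cyc_succ modn_small // => js.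
  case: (ltngtP j i) => [lji | lij | /eqP]; last by rewrite (negbTE ji).
    by apply/or3P; apply: Or33; rewrite !theta_nb_lt ?lji ?ik ?ilt ?ltnSn.
  have lij' : (i.+1 < j)%N by rewrite ltn_neqAle eq_sym js lij.
  apply/or3P; apply: Or31; apply/andP; split; first by rewrite theta_nb_lt ?ltnSn.
  by rewrite ltW // theta_nb_lt ?lij'.
have iE : i.+1 = deg E v by apply/eqP; rewrite eqn_leq ik ige.
move: js; rewrite /cyc_succ iE modnn => j0.
have lji : (j < i)%N by rewrite ltn_neqAle ji -ltnS iE jk.
apply/or3P; apply: Or32; apply/andP; split; last by rewrite theta_nb_lt ?lji.
by rewrite ltW // theta_nb_lt // lt0n j0.
Qed.

Lemma sum_angle_at_nb : (1 < deg E v)%N ->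
  \sum_(i < deg E v) angle_at p v (nb i) (nb (cyc_succ i)) = 360.
Proof.
move=> k1; have k0 := ltnW k1; set m := (deg E v).-1.
have kE : deg E v = m.+1 by rewrite prednK.
have m0 : (0 < m)%N by rewrite -ltnS -kE.
have step (i : 'I_m) :
    angle_at p v (nb i) (nb (cyc_succ i)) = theta (nb i.+1) - theta (nb i).
  have ik : (i.+1 < deg E v)%N by rewrite kE ltnS.
  rewrite /cyc_succ modn_small // angle_at_theta ?adj_nb ?(ltn_trans (ltnSn i)) //.
  by rewrite mod360_id // subr_ge0 ltW // theta_nb_lt // ltnSn.
have wrap : angle_at p v (nb m) (nb (cyc_succ m)) = theta (nb 0) - theta (nb m) + 360.
  rewrite /cyc_succ -kE modnn angle_at_theta ?adj_nb ?kE // mod360_neg //.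
  by rewrite subr_lt0 theta_nb_lt // m0 kE ltnSn.
rewrite kE big_ord_recr /= (eq_bigr _ (fun i _ => step i)) wrap.
rewrite -(big_mkord xpredT (fun i => theta (nb i.+1) - theta (nb i))) telescope_sumr //.
lra.
Qed.

End Neighbours.

Lemma consecutive_angle_le (R : realType) n (p : 'I_n -> R * R) E v u w z :
  consecutive p E v u w -> E v z -> z != u -> angle_at p v u w <= angle_at p v u z.
Proof.
case=> _ _ _ min_w Evz zu; have [-> //|zw] := eqVneq z w.
by rewrite leNgt; apply/negP; apply: min_w.
Qed.

Section EmstVertex.
Variables (R : realType) (n : nat) (p : 'I_n -> R * R) (E : rel 'I_n) (v : 'I_n).
Hypotheses (p_inj : injective p) (emst : is_EMST p E).

Local Notation nb := (nb p E v).
Local Notation cyc_succ := (cyc_succ E v).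

Lemma emst_nbr_ne x : E v x -> p x - p v != 0.
Proof.
have [[[_ irrE] _] _] := emst; move=> Evx; rewrite subr_eq0.
by apply: contraTneq Evx => /p_inj ->; rewrite irrE.
Qed.

Lemma emst_angle_ge60 x y : E v x -> E v y -> x != y -> 60 <= angle_at p v x y.
Proof.
move=> Evx Evy xy.
have abE : p x - p v - (p y - p v) = p x - p y by rewrite opprB addrA subrK.
apply: ccw_deg_ge60; rewrite ?emst_nbr_ne // abE -!edist_vnorm.
- by rewrite !(edist_sym (p x)) (emst_exchange emst) // eq_sym.
- by rewrite (edist_sym (p y)) (emst_exchange emst).
Qed.

Lemma emst_nbr_sep x y : E v x -> E v y -> x != y -> 0 < angle_at p v x y.
Proof. by move=> Evx Evy xy; apply: lt_le_trans (emst_angle_ge60 Evx Evy xy); lra. Qed.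

Definition gap i := angle_at p v (nb i) (nb (cyc_succ i)).

Lemma consecutive_gap i : (1 < deg E v)%N -> (i < deg E v)%N ->
  consecutive p E v (nb i) (nb (cyc_succ i)).
Proof. exact: consecutive_nb emst_nbr_ne emst_nbr_sep i. Qed.

Lemma sum_gap : (1 < deg E v)%N -> \sum_(i < deg E v) gap i = 360.
Proof. exact: sum_angle_at_nb emst_nbr_ne emst_nbr_sep. Qed.

Lemma gap_ge60 i : (1 < deg E v)%N -> (i < deg E v)%N -> 60 <= gap i.
Proof.
move=> k1 ik; have [Ei Es si _] := consecutive_gap k1 ik.
exact: emst_angle_ge60.
Qed.

Lemma consecutive_le_gap u w : (1 < deg E v)%N -> consecutive p E v u w ->
  exists2 i, (i < deg E v)%N & angle_at p v u w <= gap i.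
Proof.
move=> k1 uw; have [Eu _ _ _] := uw.
have ik : (index u (nbrs p E v) < deg E v)%N by rewrite -(size_nbrs p) index_mem mem_nbrs.
have uE : u = nb (index u (nbrs p E v)) by rewrite /nb nth_index ?mem_nbrs.
have [_ Es su _] := consecutive_gap k1 ik.
exists (index u (nbrs p E v)) => //; rewrite /gap -uE in Es su *.
by apply: consecutive_angle_le uw Es _; rewrite eq_sym.
Qed.

Lemma nonadjacent_gap_pair i j a b : (1 < deg E v)%N -> (i < deg E v)%N -> (j < deg E v)%N ->
  [&& i != j, i != cyc_succ j, cyc_succ i != j & cyc_succ i != cyc_succ j] ->
  gap i <= a -> gap j <= b ->
  exists u w u' w',
    [/\ consecutive p E v u w, consecutive p E v u' w', nonadjacent u w u' w',
        angle_at p v u w <= a & angle_at p v u' w' <= b].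
Proof.
move=> k1 ik jk /and4P [ij isj sij ss] ga gb.
exists (nb i), (nb (cyc_succ i)), (nb j), (nb (cyc_succ j)).
have sk l : (cyc_succ l < deg E v)%N by apply: cyc_succ_lt; apply: ltnW.
split => //; try exact: consecutive_gap.
by split; rewrite nb_eq.
Qed.

Lemma emst_deg3 : deg E v = 3%N ->
  exists u w, consecutive p E v u w /\ angle_at p v u w <= 120.
Proof.
move=> k3; have k1 : (1 < deg E v)%N by rewrite k3.
have := sum_gap k1; rewrite k3 !big_ord_recr big_ord0 /= add0r => sum3.
have [i ik gi] : exists2 i, (i < 3)%N & gap i <= 120.
  have [?|?] := lerP (gap 0) 120; first by exists 0%N.
  have [?|?] := lerP (gap 1) 120; first by exists 1%N.
  by exists 2%N => //; lra.
by exists (nb i), (nb (cyc_succ i)); split => //; apply: consecutive_gap; rewrite ?k3.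
Qed.

Lemma emst_deg4 : deg E v = 4%N ->
  exists u w u' w',
    [/\ consecutive p E v u w, consecutive p E v u' w', nonadjacent u w u' w',
        angle_at p v u w <= 90 & angle_at p v u' w' <= 120].
Proof.
move=> k4; have k1 : (1 < deg E v)%N by rewrite k4.
have := sum_gap k1; rewrite k4 !big_ord_recr big_ord0 /= add0r => sum4.
have [g0 g1 g2 g3] : [/\ 60 <= gap 0, 60 <= gap 1, 60 <= gap 2 & 60 <= gap 3].
  by split; apply: gap_ge60; rewrite ?k4.
have [h|h] := lerP (gap 0 + gap 2) 180.
  have [h'|h'] := lerP (gap 0) (gap 2).
    by apply: (@nonadjacent_gap_pair 0%N 2%N); rewrite /cyc_succ ?k4 //; lra.
  by apply: (@nonadjacent_gap_pair 2%N 0%N); rewrite /cyc_succ ?k4 //; lra.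
have [h'|h'] := lerP (gap 1) (gap 3).
  by apply: (@nonadjacent_gap_pair 1%N 3%N); rewrite /cyc_succ ?k4 //; lra.
by apply: (@nonadjacent_gap_pair 3%N 1%N); rewrite /cyc_succ ?k4 //; lra.
Qed.

Lemma emst_deg5 : deg E v = 5%N ->
  (forall u w, consecutive p E v u w -> angle_at p v u w <= 120) /\
  exists u w u' w',
    [/\ consecutive p E v u w, consecutive p E v u' w', nonadjacent u w u' w',
        angle_at p v u w <= 90 & angle_at p v u' w' <= 90].
Proof.
move=> k5; have k1 : (1 < deg E v)%N by rewrite k5.
have := sum_gap k1; rewrite k5 !big_ord_recr big_ord0 /= add0r => sum5.
have [g0 g1 g2 g3 g4] :
    [/\ 60 <= gap 0, 60 <= gap 1, 60 <= gap 2, 60 <= gap 3 & 60 <= gap 4].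
  by split; apply: gap_ge60; rewrite ?k5.
split.
  move=> u w /(consecutive_le_gap k1) [i]; rewrite k5 => ik /le_trans; apply.
  by case: i ik => [|[|[|[|[|i]]]]] //= _; lra.
have [h0|h0] := lerP (gap 0) 90.
  have [h2|h2] := lerP (gap 2) 90.
    by apply: (@nonadjacent_gap_pair 0%N 2%N); rewrite /cyc_succ ?k5 //; lra.
  by apply: (@nonadjacent_gap_pair 0%N 3%N); rewrite /cyc_succ ?k5 //; lra.
have [h1|h1] := lerP (gap 1) 90.
  have [h3|h3] := lerP (gap 3) 90.
    by apply: (@nonadjacent_gap_pair 1%N 3%N); rewrite /cyc_succ ?k5 //; lra.
  by apply: (@nonadjacent_gap_pair 1%N 4%N); rewrite /cyc_succ ?k5 //; lra.
suff : (360 : R) < 360 by rewrite ltxx.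
lra.
Qed.

End EmstVertex.

Unset Implicit Arguments.

Theorem lemma1 (R : realType) (n : nat) (p : 'I_n -> (R * R)%type)
  (E : rel 'I_n) (v : 'I_n) :
  injective p -> is_EMST p E ->
  [/\ (deg E v = 3%N ->
        exists u w, consecutive p E v u w /\ angle_at p v u w <= 120),
      (deg E v = 4%N ->
        exists u w u' w',
          [/\ consecutive p E v u w, consecutive p E v u' w',
              nonadjacent u w u' w',
              angle_at p v u w <= 90 & angle_at p v u' w' <= 120])
    & (deg E v = 5%N ->
        (forall u w, consecutive p E v u w -> angle_at p v u w <= 120) /\
        exists u w u' w',
          [/\ consecutive p E v u w, consecutive p E v u' w',
              nonadjacent u w u' w',
              angle_at p v u w <= 90 & angle_at p v u' w' <= 90])].
Proof.
move=> p_inj emst.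
by split; [exact: emst_deg3 p_inj emst | exact: emst_deg4 p_inj emst
          | exact: emst_deg5 p_inj emst].
Qed.
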